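(* Let $U$ be an $N^2\times N^2$ complex matrix, with entries $U_{(i,j),(k,l)}$ indexed by pairs $i,j,k,l\in\{1,\dots,N\}$. Then $U$ is multiunitary if and only if the state $|\psi_U\rangle=\frac1N\sum_{i,j,k,l}U_{(i,j),(k,l)}|i\rangle|j\rangle|k\rangle|l\rangle$ is an AME(4,$N$) state, equivalently if and only if the array $|\psi_{ij}\rangle=\sum_{k,l}U_{(i,j),(k,l)}|k\rangle|l\rangle$ is a pair of orthogonal quantum Latin squares of size $N$. In particular every multiunitary matrix of size $N^2$ defines a pair of OQLS of size $N$, and every pair of OQLS $\{|\psi_{ij}\rangle\}$ defines the multiunitary matrix $U_{(i,j),(k,l)}=\langle k|\langle l|\psi_{ij}\rangle$.
   Context: For an $N^2\times N^2$ matrix $M$ with entries $M_{(i,j),(k,l)}$, its reshuffling is $M^R_{(i,j),(k,l)}=M_{(i,k),(j,l)}$ and its partial transpose is $M^\Gamma_{(i,j),(k,l)}=M_{(i,l),(k,j)}$. $U$ is multiunitary if $U$, $U^R$ and $U^\Gamma$ are all unitary. A pure state in $(\mathbb{C}^N)^{\otimes4}$ is AME(4,$N$) if its reduced density matrix on every pair of the four parties equals $\mathbb{I}_{N^2}/N^2$. An $N\times N$ array $\{|\psi_{ij}\rangle\}$ of vectors in $\mathbb{C}^N\otimes\mathbb{C}^N$ is a pair of orthogonal quantum Latin squares if: (1) it is an orthonormal basis of $\mathbb{C}^N\otimes\mathbb{C}^N$; (2) for each tensor factor $X$ and all $j,k$, $\mathrm{Tr}_X\sum_i|\psi_{ji}\rangle\langle\psi_{ki}|=\delta_{jk}\mathbb{I}_N$;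 (3) for each tensor factor $X$ and all $j,k$, $\mathrm{Tr}_X\sum_i|\psi_{ij}\rangle\langle\psi_{ik}|=\delta_{jk}\mathbb{I}_N$. *)

(* Complex scalars: an arbitrary numClosedFieldType C
   (e.g. the complex numbers R[i]); conjugation is z^*. *)
From HB Require Import structures.
From mathcomp Require Import all_boot all_order all_algebra.
Set Implicit Arguments. Unset Strict Implicit. Unset Printing Implicit Defensive.
Import Order.TTheory GRing.Theory Num.Theory.
Local Open Scope ring_scope.

(* Index of the basis of C^N (x) C^N : pairs (i,j) with i,j in {0..N-1}. *)
Notation pidx N := ('I_N * 'I_N)%type.

Definition bimx (C : Type) (N : nat) := pidx N -> pidx N -> C.

(* A vector of C^N (x) C^N, with components v(k,l) = <k|<l|v>. *)
Definition bivec (C : Type) (N : nat) := pidx N -> C.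

Section Defs.
Variables (C : numClosedFieldType) (N : nat).

Definition unitary (U : bimx C N) : Prop :=
  (forall a b : pidx N, \sum_(m : pidx N) U a m * (U b m)^* = (a == b)%:R) /\
  (forall a b : pidx N, \sum_(m : pidx N) (U m a)^* * U m b = (a == b)%:R).

Definition reshuffle (M : bimx C N) : bimx C N :=
  fun a b => M (a.1, b.1) (a.2, b.2).

Definition ptranspose (M : bimx C N) : bimx C N :=
  fun a b => M (a.1, b.2) (b.1, a.2).

Definition multiunitary (U : bimx C N) : Prop :=
  [/\ unitary U, unitary (reshuffle U) & unitary (ptranspose U)].

(* Pure states of four parties: amplitudes psi(x) for x : 'I_4 -> 'I_N. *)
Definition state4 := {ffun 'I_4 -> 'I_N} -> C.

(* Reduced density matrix on the pair of parties {p,q}: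
   rho_{(a,b),(a',b')} = sum over basis configurations s,t that agree on the
   two traced-out parties, with s p = a, s q = b, t p = a', t q = b',
   of psi(s) conj(psi(t)). *)
Definition reduced2 (psi : state4) (p q : 'I_4) (a b a' b' : 'I_N) : C :=
  \sum_(s : {ffun 'I_4 -> 'I_N})
   \sum_(t : {ffun 'I_4 -> 'I_N} |
          [&& [forall r : 'I_4, (r != p) && (r != q) ==> (s r == t r)],
              s p == a, s q == b, t p == a' & t q == b'])
     psi s * (psi t)^*.

Definition AME4 (psi : state4) : Prop :=
  forall p q : 'I_4, p != q ->
  forall a b a' b' : 'I_N,
    reduced2 psi p q a b a' b' = ((a == a') && (b == b'))%:R / (N ^ 2)%:R.

Definition psiU (U : bimx C N) : state4 :=
  fun s => N%:R^-1 * U (s ord0, s (inord 1)) (s (inord 2), s (inord 3)).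

Definition inner (v w : bivec C N) : C := \sum_(m : pidx N) (v m)^* * w m.

Definition orthonormal_basis (psi : 'I_N -> 'I_N -> bivec C N) : Prop :=
  (forall i j i' j' : 'I_N,
      inner (psi i j) (psi i' j') = ((i == i') && (j == j'))%:R) /\
  (forall v : bivec C N, exists c : 'I_N -> 'I_N -> C,
      forall m : pidx N, v m = \sum_(i : 'I_N) \sum_(j : 'I_N) c i j * psi i j m).

Definition ptrace1 (M : bimx C N) (b b' : 'I_N) : C :=
  \sum_(a : 'I_N) M (a, b) (a, b').
Definition ptrace2 (M : bimx C N) (a a' : 'I_N) : C :=
  \sum_(b : 'I_N) M (a, b) (a', b).

Definition outer_sum (v w : 'I_N -> bivec C N) : bimx C N :=
  fun x y => \sum_(i : 'I_N) v i x * (w i y)^*.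

Definition ptraces_delta (M : bimx C N) (d : bool) : Prop :=
  (forall x y : 'I_N, ptrace1 M x y = (d && (x == y))%:R) /\
  (forall x y : 'I_N, ptrace2 M x y = (d && (x == y))%:R).

Definition OQLS (psi : 'I_N -> 'I_N -> bivec C N) : Prop :=
  [/\ orthonormal_basis psi,
      (forall j k : 'I_N,
          ptraces_delta (outer_sum (fun i => psi j i) (fun i => psi k i)) (j == k))
    & (forall j k : 'I_N,
          ptraces_delta (outer_sum (fun i => psi i j) (fun i => psi i k)) (j == k))].

Definition arrayU (U : bimx C N) : 'I_N -> 'I_N -> bivec C N :=
  fun i j kl => U (i, j) kl.

Definition matOQLS (psi : 'I_N -> 'I_N -> bivec C N) : bimx C N :=
  fun ij kl => psi ij.1 ij.2 kl.

End Defs.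

(* Every two-party marginal of |psi_U> is, up to the factor 1/N^2, the Gram
   matrix of the rows or of the columns of U, U^R or U^Gamma: the six pairs of
   parties give exactly the six orthonormality conditions of multiunitarity.
   Likewise, the array |psi_ij> is an orthonormal basis iff U is unitary, the
   partial traces of condition (2) are the row Gram matrices of U^Gamma and U^R,
   and those of condition (3) the column Gram matrices of U^R and U^Gamma. *)
From HB Require Import structures.
From mathcomp Require Import all_boot all_order all_algebra.
Set Implicit Arguments. Unset Strict Implicit. Unset Printing Implicit Defensive.
Import Order.TTheory GRing.Theory Num.Theory.
Local Open Scope ring_scope.

Lemma sum_mul_delta (C : nzRingType) (T : finType) (F : T -> C) (a : T) :
  \sum_(m : T) F m * (m == a)%:R = F a.
Proof.
rewrite (bigD1 a) //= eqxx mulr1 big1 ?addr0 // => m /negbTE ->.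
by rewrite mulr0.
Qed.

Lemma sum_if_fst (C : nmodType) (I J : finType) (F : I * J -> C) (i0 : I) :
  \sum_(y : I * J) (if y.1 == i0 then F y else 0) = \sum_(j : J) F (i0, j).
Proof.
transitivity (\sum_i \sum_j (if i == i0 then F (i, j) else 0)).
  by rewrite pair_bigA; apply: eq_bigr => -[i j].
rewrite (bigD1 i0) //= eqxx [X in _ + X]big1 ?addr0 // => i /negbTE i_i0.
by apply: big1 => j _; rewrite i_i0.
Qed.

Section Multiunitary.
Variables (C : numClosedFieldType) (N : nat).
Implicit Types (U M : bimx C N) (psi : state4 C N).

Definition bitr M : bimx C N := fun x y => M y x.

Definition gram M x y := \sum_(m : pidx N) M x m * (M y m)^*.

Definition orthonormal_rows M := forall x y : pidx N, gram M x y = (x == y)%:R.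

Lemma gram_bitrE M x y : gram (bitr M) x y = \sum_(m : pidx N) (M m y)^* * M m x.
Proof. by apply: eq_bigr => m _; rewrite mulrC. Qed.

Lemma unitaryE M : unitary M <-> orthonormal_rows M /\ orthonormal_rows (bitr M).
Proof.
have colsE : orthonormal_rows (bitr M) <->
    (forall x y, \sum_(m : pidx N) (M m x)^* * M m y = (x == y)%:R).
  by split=> h x y; rewrite ?gram_bitrE eq_sym -h // -gram_bitrE.
by split=> -[rows cols]; split=> //; apply/colsE.
Qed.

Lemma multiunitaryE U : multiunitary U <->
  [/\ orthonormal_rows U /\ orthonormal_rows (bitr U),
      orthonormal_rows (reshuffle U) /\ orthonormal_rows (bitr (reshuffle U))
    & orthonormal_rows (ptranspose U) /\ orthonormal_rows (bitr (ptranspose U))].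
Proof. by split=> -[/unitaryE ? /unitaryE ? /unitaryE ?]; split=> //; apply/unitaryE. Qed.

Lemma eq_delta_pair (g : pidx N -> pidx N -> C) :
  (forall i j i' j' : 'I_N, g (i, j) (i', j') = ((i == i') && (j == j'))%:R) <->
  (forall x y : pidx N, g x y = (x == y)%:R).
Proof. by split=> h => [[i j] [i' j']|i j i' j']; rewrite h xpair_eqE. Qed.

Lemma inner_arrayU U (i j i' j' : 'I_N) :
  inner (arrayU U i j) (arrayU U i' j') = gram U (i', j') (i, j).
Proof. by apply: eq_bigr => m _; rewrite mulrC. Qed.

Lemma orthonormal_rows_coef U (c : pidx N -> C) (v : bivec C N) (y : pidx N) :
  orthonormal_rows U -> (forall m, v m = \sum_(x : pidx N) c x * U x m) ->
  c y = \sum_(m : pidx N) (U y m)^* * v m.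
Proof.
move=> rows vE; under eq_bigr => m _ do rewrite vE big_distrr.
rewrite exchange_big /= -(sum_mul_delta c y).
apply: eq_bigr => x _; rewrite -rows big_distrr; apply: eq_bigr => m _.
by rewrite mulrCA mulrC.
Qed.

Lemma orthonormal_cols_expansion U (v : bivec C N) (m0 : pidx N) :
  orthonormal_rows (bitr U) ->
  v m0 = \sum_(x : pidx N) (\sum_(m : pidx N) (U x m)^* * v m) * U x m0.
Proof.
move=> cols; under eq_bigr => x _ do rewrite big_distrl.
rewrite exchange_big /= -(sum_mul_delta v m0).
apply: eq_bigr => m _; rewrite eq_sym -cols gram_bitrE mulr_sumr.
by apply: eq_bigr => x _; rewrite mulrA [v m * _]mulrC.
Qed.

Lemma spanning_orthonormal_cols U :
  orthonormal_rows U ->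
  (forall v : bivec C N, exists c : pidx N -> C,
     forall m, v m = \sum_(x : pidx N) c x * U x m) ->
  orthonormal_rows (bitr U).
Proof.
move=> rows span x y; rewrite gram_bitrE.
have [c vE] := span (fun m => (m == y)%:R).
(* Expanding the basis vector e_y along the rows of U gives c z = conj (U z y). *)
rewrite vE; apply: eq_bigr => z _.
by rewrite (orthonormal_rows_coef z rows vE) sum_mul_delta.
Qed.

Lemma orthonormal_basis_arrayU U :
  orthonormal_basis (arrayU U) <-> orthonormal_rows U /\ orthonormal_rows (bitr U).
Proof.
have rowsE : (forall i j i' j' : 'I_N, inner (arrayU U i j) (arrayU U i' j') =
    ((i == i') && (j == j'))%:R) <-> orthonormal_rows U.
  apply: iff_trans (eq_delta_pair _).
  split=> h i j i' j'; first by rewrite -inner_arrayU h eq_sym [j == _]eq_sym.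
  by rewrite inner_arrayU h eq_sym [j == _]eq_sym.
split=> -[/rowsE rows span]; split=> //.
- apply: spanning_orthonormal_cols => // v; have [c vE] := span v.
  exists (fun x => c x.1 x.2) => m; rewrite vE pair_big.
  by apply: eq_bigr => -[i j].
- move=> v; exists (fun i j => \sum_m (U (i, j) m)^* * v m) => m0.
  rewrite (orthonormal_cols_expansion v m0 span) pair_big.
  by apply: eq_bigr => -[i j].
Qed.

Lemma ptrace1_rows_arrayU U (j k b b' : 'I_N) :
  ptrace1 (outer_sum (fun i => arrayU U j i) (fun i => arrayU U k i)) b b' =
  gram (ptranspose U) (j, b) (k, b').
Proof. by rewrite /ptrace1 /outer_sum /gram pair_big. Qed.

Lemma ptrace2_rows_arrayU U (j k a a' : 'I_N) :
  ptrace2 (outer_sum (fun i => arrayU U j i) (fun i => arrayU U k i)) a a' =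
  gram (reshuffle U) (j, a) (k, a').
Proof. by rewrite /ptrace2 /outer_sum /gram exchange_big pair_big. Qed.

Lemma ptrace1_cols_arrayU U (j k b b' : 'I_N) :
  ptrace1 (outer_sum (fun i => arrayU U i j) (fun i => arrayU U i k)) b b' =
  gram (bitr (reshuffle U)) (j, b) (k, b').
Proof. by rewrite /ptrace1 /outer_sum /gram exchange_big pair_big. Qed.

Lemma ptrace2_cols_arrayU U (j k a a' : 'I_N) :
  ptrace2 (outer_sum (fun i => arrayU U i j) (fun i => arrayU U i k)) a a' =
  gram (bitr (ptranspose U)) (a, j) (a', k).
Proof. by rewrite /ptrace2 /outer_sum /gram exchange_big pair_big. Qed.

Lemma OQLS_rows_arrayU U :
  (forall j k : 'I_N, ptraces_delta
     (outer_sum (fun i => arrayU U j i) (fun i => arrayU U k i)) (j == k)) <->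
  orthonormal_rows (ptranspose U) /\ orthonormal_rows (reshuffle U).
Proof.
split=> [h | [hG hR] j k].
  split; apply/eq_delta_pair => j b k b'.
    by rewrite -ptrace1_rows_arrayU; case: (h j k).
  by rewrite -ptrace2_rows_arrayU; case: (h j k).
by split=> x y; rewrite (ptrace1_rows_arrayU, ptrace2_rows_arrayU) (hG, hR) xpair_eqE.
Qed.

Lemma OQLS_cols_arrayU U :
  (forall j k : 'I_N, ptraces_delta
     (outer_sum (fun i => arrayU U i j) (fun i => arrayU U i k)) (j == k)) <->
  orthonormal_rows (bitr (reshuffle U)) /\ orthonormal_rows (bitr (ptranspose U)).
Proof.
split=> [h | [hR hG] j k].
  split; apply/eq_delta_pair => a j a' k.
    by rewrite -ptrace1_cols_arrayU; case: (h a a').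
  by rewrite andbC -ptrace2_cols_arrayU; case: (h j k).
by split=> x y; rewrite (ptrace1_cols_arrayU, ptrace2_cols_arrayU) (hR, hG) xpair_eqE // andbC.
Qed.

Lemma multiunitary_OQLS U : multiunitary U <-> OQLS (arrayU U).
Proof.
split=> [/multiunitaryE[? [? ?] [? ?]] | ].
  by split; [exact/orthonormal_basis_arrayU | exact/OQLS_rows_arrayU
            | exact/OQLS_cols_arrayU].
case=> /orthonormal_basis_arrayU ? /OQLS_rows_arrayU[? ?] /OQLS_cols_arrayU[? ?].
exact/multiunitaryE.
Qed.

Definition maximally_mixed2 psi (p q : 'I_4) := forall a b a' b' : 'I_N,
  reduced2 psi p q a b a' b' = ((a == a') && (b == b'))%:R / (N ^ 2)%:R.

Lemma reduced2C psi p q (a b a' b' : 'I_N) :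
  reduced2 psi q p b a b' a' = reduced2 psi p q a b a' b'.
Proof.
apply: eq_bigr => s _; apply: eq_bigl => t.
apply/and5P/and5P => -[agree ? ? ? ?]; split=> //;
  by apply/forallP => r; rewrite andbC; apply: (forallP agree).
Qed.

Lemma maximally_mixed2C psi p q :
  maximally_mixed2 psi p q -> maximally_mixed2 psi q p.
Proof. by move=> mm a b a' b'; rewrite -reduced2C mm andbC. Qed.

(* Closed ordinals, so that comparisons between parties reduce by computation. *)
Definition o0 : 'I_4 := Ordinal (isT : (0 < 4)%N).
Definition o1 : 'I_4 := Ordinal (isT : (1 < 4)%N).
Definition o2 : 'I_4 := Ordinal (isT : (2 < 4)%N).
Definition o3 : 'I_4 := Ordinal (isT : (3 < 4)%N).

Lemma ord4_cases (P : 'I_4 -> Prop) : P o0 -> P o1 -> P o2 -> P o3 -> forall r, P r.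
Proof.
move=> P0 P1 P2 P3 [[|[|[|[|n]]]] lt_n4] //.
- by rewrite (_ : Ordinal lt_n4 = o0) //; apply: val_inj.
- by rewrite (_ : Ordinal lt_n4 = o1) //; apply: val_inj.
- by rewrite (_ : Ordinal lt_n4 = o2) //; apply: val_inj.
- by rewrite (_ : Ordinal lt_n4 = o3) //; apply: val_inj.
Qed.

Lemma AME4E psi : AME4 psi <->
  [/\ maximally_mixed2 psi o0 o1 /\ maximally_mixed2 psi o2 o3,
      maximally_mixed2 psi o0 o2 /\ maximally_mixed2 psi o1 o3
    & maximally_mixed2 psi o0 o3 /\ maximally_mixed2 psi o2 o1].
Proof.
split=> [ame | [[m01 m23] [m02 m13] [m03 m21]] p q].
  by do ![split]; apply: ame.
elim/ord4_cases: p; elim/ord4_cases: q => p_q;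
  first [ by rewrite eqxx in p_q
        | by apply: maximally_mixed2C | done ].
Qed.

Definition config4 (p q r1 r2 : 'I_4) (a b c d : 'I_N) : {ffun 'I_4 -> 'I_N} :=
  [ffun r => if r == p then a else if r == q then b else if r == r1 then c else d].

Definition set2 (p q : 'I_4) (a b : 'I_N) (s : {ffun 'I_4 -> 'I_N}) :
  {ffun 'I_4 -> 'I_N} := [ffun r => if r == p then a else if r == q then b else s r].

Lemma reduced2_inner_sum psi (p q : 'I_4) (a b a' b' : 'I_N)
    (s : {ffun 'I_4 -> 'I_N}) : p != q ->
  \sum_(t : {ffun 'I_4 -> 'I_N} |
          [&& [forall r : 'I_4, (r != p) && (r != q) ==> (s r == t r)],
              s p == a, s q == b, t p == a' & t q == b'])
     psi s * (psi t)^* =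
  if (s p == a) && (s q == b) then psi s * (psi (set2 p q a' b' s))^* else 0.
Proof.
move=> p_q; case: ifP => [/andP[/eqP sp /eqP sq] | s_ab]; last first.
  by rewrite big_pred0 // => t; apply: contraFF s_ab => /and5P[_ -> -> _ _].
rewrite (eq_bigl (pred1 (set2 p q a' b' s))) ?big_pred1_eq // => t /=.
rewrite sp sq !eqxx /=.
apply/idP/eqP => [/and3P[/forallP agree /eqP tp /eqP tq] | ->].
  apply/ffunP => r; rewrite ffunE.
  case: eqP => [->//|/eqP r_p]; case: eqP => [->//|/eqP r_q].
  by have := agree r; rewrite r_p r_q => /eqP.
rewrite !ffunE eqxx [q == p]eq_sym (negbTE p_q) eqxx /= !eqxx andbT.
by apply/forallP => r; rewrite ffunE; apply/implyP => /andP[/negbTE -> /negbTE ->].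
Qed.

Lemma reduced2_config psi (p q r1 r2 : 'I_4) (a b a' b' : 'I_N) :
  p != q -> p != r1 -> p != r2 -> q != r1 -> q != r2 -> r1 != r2 ->
  (forall r : 'I_4, [|| r == p, r == q, r == r1 | r == r2]) ->
  reduced2 psi p q a b a' b' =
  \sum_(v : pidx N) psi (config4 p q r1 r2 a b v.1 v.2) *
                    (psi (config4 p q r1 r2 a' b' v.1 v.2))^*.
Proof.
move=> p_q p_r1 p_r2 q_r1 q_r2 r1_r2 cover.
have cfg_p x y c d : config4 p q r1 r2 x y c d p = x by rewrite ffunE eqxx.
have cfg_q x y c d : config4 p q r1 r2 x y c d q = y.
  by rewrite ffunE [q == p]eq_sym (negbTE p_q) eqxx.
have cfg_r1 x y c d : config4 p q r1 r2 x y c d r1 = c.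
  by rewrite ffunE [r1 == p]eq_sym (negbTE p_r1) [r1 == q]eq_sym (negbTE q_r1) eqxx.
have cfg_r2 x y c d : config4 p q r1 r2 x y c d r2 = d.
  by rewrite ffunE [r2 == p]eq_sym (negbTE p_r2) [r2 == q]eq_sym (negbTE q_r2)
     [r2 == r1]eq_sym (negbTE r1_r2).
rewrite /reduced2 (eq_bigr _ (fun s _ => reduced2_inner_sum psi a b a' b' s p_q)).
rewrite (reindex (fun y : pidx N * pidx N => config4 p q r1 r2 y.1.1 y.1.2 y.2.1 y.2.2)) /=.
  rewrite -(sum_if_fst (fun y : pidx N * pidx N =>
      psi (config4 p q r1 r2 a b y.2.1 y.2.2) *
      (psi (config4 p q r1 r2 a' b' y.2.1 y.2.2))^*) (a, b)).
  apply: eq_bigr => -[[x0 x1] [x2 x3]] _ /=.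
  rewrite cfg_p cfg_q xpair_eqE; case: ifP => // /andP[/eqP -> /eqP ->].
  congr (_ * (psi _)^*); apply/ffunP => r; rewrite !ffunE.
  by case: (r == p); case: (r == q).
apply: onW_bij; exists (fun s : {ffun 'I_4 -> 'I_N} => ((s p, s q), (s r1, s r2))).
  by move=> [[x0 x1] [x2 x3]] /=; rewrite cfg_p cfg_q cfg_r1 cfg_r2.
move=> s; apply/ffunP => r; rewrite ffunE /=.
case: eqP => [->//|/eqP r_p]; case: eqP => [->//|/eqP r_q]; case: eqP => [->//|/eqP r_r1].
by move: (cover r); rewrite (negbTE r_p) (negbTE r_q) (negbTE r_r1) => /eqP ->.
Qed.

Lemma psiUE U s : psiU U s = N%:R^-1 * U (s o0, s o1) (s o2, s o3).
Proof.
by rewrite /psiU; congr (_ * U (s _, s _) (s _, s _)); apply: val_inj; rewrite /= ?inordK.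
Qed.

Lemma mul_psiU_conj (X Y : C) :
  N%:R^-1 * X * (N%:R^-1 * Y)^* = (N ^ 2)%:R^-1 * (X * Y^*).
Proof. by rewrite rmorphM fmorphV rmorph_nat natrX -exprVn expr2 mulrACA. Qed.

Ltac reduced2_psiU r1 r2 :=
  rewrite (@reduced2_config _ _ _ r1 r2) //; last (by apply: ord4_cases);
  rewrite /gram mulr_sumr; apply: eq_bigr => -[c d] _;
  rewrite !psiUE !ffunE /= mul_psiU_conj.

Section PairsOfParties.
Variables (U : bimx C N) (a b a' b' : 'I_N).

Lemma reduced2_psiU01 :
  reduced2 (psiU U) o0 o1 a b a' b' = (N ^ 2)%:R^-1 * gram U (a, b) (a', b').
Proof. by reduced2_psiU o2 o3. Qed.

Lemma reduced2_psiU23 :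
  reduced2 (psiU U) o2 o3 a b a' b' = (N ^ 2)%:R^-1 * gram (bitr U) (a, b) (a', b').
Proof. by reduced2_psiU o0 o1. Qed.

Lemma reduced2_psiU02 : reduced2 (psiU U) o0 o2 a b a' b' =
  (N ^ 2)%:R^-1 * gram (reshuffle U) (a, b) (a', b').
Proof. by reduced2_psiU o1 o3. Qed.

Lemma reduced2_psiU13 : reduced2 (psiU U) o1 o3 a b a' b' =
  (N ^ 2)%:R^-1 * gram (bitr (reshuffle U)) (a, b) (a', b').
Proof. by reduced2_psiU o0 o2. Qed.

Lemma reduced2_psiU03 : reduced2 (psiU U) o0 o3 a b a' b' =
  (N ^ 2)%:R^-1 * gram (ptranspose U) (a, b) (a', b').
Proof. by reduced2_psiU o2 o1. Qed.

Lemma reduced2_psiU21 : reduced2 (psiU U) o2 o1 a b a' b' =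
  (N ^ 2)%:R^-1 * gram (bitr (ptranspose U)) (a, b) (a', b').
Proof. by reduced2_psiU o0 o3. Qed.

End PairsOfParties.

Lemma maximally_mixed2_gram psi p q M :
  (forall a b a' b' : 'I_N,
     reduced2 psi p q a b a' b' = (N ^ 2)%:R^-1 * gram M (a, b) (a', b')) ->
  maximally_mixed2 psi p q <-> orthonormal_rows M.
Proof.
move=> rhoE; split=> [mm | rows a b a' b'].
  apply/eq_delta_pair => a b a' b'.
  have N_gt0 : (0 < N)%N by apply: leq_ltn_trans (ltn_ord a).
  have N2_neq0 : (N ^ 2)%:R != 0 :> C by rewrite pnatr_eq0 expn_eq0 negb_and -lt0n N_gt0.
  by apply: (mulfI (invr_neq0 N2_neq0)); rewrite -rhoE mm mulrC.
by rewrite rhoE rows xpair_eqE mulrC.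
Qed.

Lemma multiunitary_AME4 U : multiunitary U <-> AME4 (psiU U).
Proof.
have m01 := maximally_mixed2_gram (reduced2_psiU01 U).
have m23 := maximally_mixed2_gram (reduced2_psiU23 U).
have m02 := maximally_mixed2_gram (reduced2_psiU02 U).
have m13 := maximally_mixed2_gram (reduced2_psiU13 U).
have m03 := maximally_mixed2_gram (reduced2_psiU03 U).
have m21 := maximally_mixed2_gram (reduced2_psiU21 U).
split=> [/multiunitaryE[[/m01 ? /m23 ?] [/m02 ? /m13 ?] [/m03 ? /m21 ?]] |
         /AME4E[[/m01 ? /m23 ?] [/m02 ? /m13 ?] [/m03 ? /m21 ?]]].
  exact/AME4E.
exact/multiunitaryE.
Qed.

End Multiunitary.

Theorem mainTheorem13 (C : numClosedFieldType) (N : nat) :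
  (forall U : bimx C N,
      (multiunitary U <-> AME4 (psiU U)) /\
      (multiunitary U <-> OQLS (arrayU U))) /\
  (forall U : bimx C N, multiunitary U -> OQLS (arrayU U)) /\
  (forall psi : 'I_N -> 'I_N -> bivec C N, OQLS psi -> multiunitary (matOQLS psi)).
Proof.
split; [|split].
- by move=> U; split; [apply: multiunitary_AME4 | apply: multiunitary_OQLS].
- by move=> U /multiunitary_OQLS.
- (* arrayU (matOQLS psi) is psi itself. *)
  by move=> psi h; apply/multiunitary_OQLS; exact: h.
Qed.
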